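(* Let $p$ be a prime and $k$ a field of characteristic $p$. Then $R_1^{(p)}\neq L_1$.
   Context: $X=\{x_1,x_2,\ldots\}$ is a countably infinite set and $k_0\langle X\rangle$ is the free associative $k$-algebra (without identity) on $X$. A $T$-space is a $k$-linear subspace closed under every algebra endomorphism of $k_0\langle X\rangle$; the $T$-space generated by a subset is the smallest $T$-space containing it. $S_p(v_1,\ldots,v_p)=\sum_{\sigma\in\Sigma_p}\prod_{i=1}^p v_{\sigma(i)}$; $R_1^{(p)}$ is the $T$-space generated by $S_p(x_1,\ldots,x_p)$, and $L_1$ is the $T$-space generated by $x_1^p$. *)

From HB Require Import structures.
From mathcomp Require Import all_boot all_order all_fingroup all_algebra.
Set Implicit Arguments. Unset Strict Implicit. Unset Printing Implicit Defensive.
Import Order.TTheory GRing.Theory Num.Theory.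
Local Open Scope ring_scope.

Section FreeAlg.
Variable k : fieldType.

(* An element of k_0<X> is given by its coefficient function on words
   (words = seq nat, letter i standing for x_i), with finite support and
   zero coefficient on the empty word (no identity). *)
Record fa := FA {
  coef : seq nat -> k;
  coef_nil : coef [::] = 0;
  coef_fin : exists s : seq (seq nat), forall w, w \notin s -> coef w = 0 }.

Lemma fa_zero_fin : exists s : seq (seq nat), forall w : seq nat, w \notin s -> (0 : k) = 0.
Proof. by exists [::]. Qed.
Definition fa_zero : fa := @FA (fun _ => 0) erefl fa_zero_fin.

Lemma fa_add_nil (f g : fa) : coef f [::] + coef g [::] = 0.
Proof. by rewrite !coef_nil addr0. Qed.
Lemma fa_add_fin (f g : fa) : exists s : seq (seq nat),
  forall w, w \notin s -> coef f w + coef g w = 0.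
Proof.
case: (coef_fin f) => sf Hf; case: (coef_fin g) => sg Hg.
exists (sf ++ sg) => w; rewrite mem_cat negb_or => /andP[hf hg].
by rewrite Hf // Hg // addr0.
Qed.
Definition fa_add (f g : fa) : fa :=
  @FA (fun w => coef f w + coef g w) (fa_add_nil f g) (fa_add_fin f g).

Lemma fa_scale_nil (a : k) (f : fa) : a * coef f [::] = 0.
Proof. by rewrite coef_nil mulr0. Qed.
Lemma fa_scale_fin (a : k) (f : fa) : exists s : seq (seq nat),
  forall w, w \notin s -> a * coef f w = 0.
Proof. case: (coef_fin f) => sf Hf; exists sf => w hw; by rewrite Hf // mulr0. Qed.
Definition fa_scale (a : k) (f : fa) : fa :=
  @FA (fun w => a * coef f w) (fa_scale_nil a f) (fa_scale_fin a f).

Definition mul_coef (f g : fa) (w : seq nat) : k :=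
  \sum_(i < (size w).+1) coef f (take i w) * coef g (drop i w).
Lemma fa_mul_nil (f g : fa) : mul_coef f g [::] = 0.
Proof. by rewrite /mul_coef big_ord1 /= coef_nil mul0r. Qed.
Lemma fa_mul_fin (f g : fa) : exists s : seq (seq nat),
  forall w, w \notin s -> mul_coef f g w = 0.
Proof.
case: (coef_fin f) => sf Hf; case: (coef_fin g) => sg Hg.
exists [seq u ++ v | u <- sf, v <- sg] => w hw.
apply: big1 => i _.
case: (boolP (take i w \in sf)) => hu; last by rewrite Hf // mul0r.
case: (boolP (drop i w \in sg)) => hv; last by rewrite Hg // mulr0.
by move: hw; rewrite -{1}(cat_take_drop i w) allpairs_f.
Qed.
Definition fa_mul (f g : fa) : fa :=
  @FA (mul_coef f g) (fa_mul_nil f g) (fa_mul_fin f g).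

Lemma fa_var_nil (i : nat) : (([::] : seq nat) == [:: i])%:R = 0 :> k.
Proof. by []. Qed.
Lemma fa_var_fin (i : nat) : exists s : seq (seq nat),
  forall w, w \notin s -> (w == [:: i])%:R = 0 :> k.
Proof. by exists [:: [:: i]] => w; rewrite inE => /negbTE ->. Qed.
Definition fa_var (i : nat) : fa :=
  @FA (fun w => (w == [:: i])%:R) (fa_var_nil i) (fa_var_fin i).

Definition fa_sum (l : seq fa) : fa := foldr fa_add fa_zero l.
Definition fa_prod (l : seq fa) : fa :=
  if l is a :: l' then foldl fa_mul a l' else fa_zero.

Definition is_alg_endo (phi : fa -> fa) : Prop :=
  (forall (a : k) (f g : fa), phi (fa_add (fa_scale a f) g) =
                              fa_add (fa_scale a (phi f)) (phi g)) /\
  (forall f g : fa, phi (fa_mul f g) = fa_mul (phi f) (phi g)).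

Definition is_tspace (V : fa -> Prop) : Prop :=
  [/\ V fa_zero,
      (forall f g, V f -> V g -> V (fa_add f g)),
      (forall a f, V f -> V (fa_scale a f)) &
      (forall phi, is_alg_endo phi -> forall f, V f -> V (phi f))].

Definition tspace_gen (S : fa -> Prop) : fa -> Prop :=
  fun f => forall V, is_tspace V -> (forall g, S g -> V g) -> V f.

Definition Sp (p : nat) : fa :=
  fa_sum [seq fa_prod [seq fa_var (s i).+1 | i <- enum 'I_p] | s : 'S_p <- enum 'S_p].

Definition x1_pow (p : nat) : fa := fa_prod (nseq p (fa_var 1)).

Definition R1 (p : nat) : fa -> Prop := tspace_gen (fun f => f = Sp p).
Definition L1 (p : nat) : fa -> Prop := tspace_gen (fun f => f = x1_pow p).

End FreeAlg.

(* Every algebra homomorphism psi : k_0<X> -> k has commutative image, so it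
   sends each of the p! monomials of S_p to the same value and hence S_p to
   p! times that value, i.e. to 0 in characteristic p.  The common kernel of
   all such homomorphisms is therefore a T-space containing R_1^(p).  But
   x_1^p is not in it: the homomorphism x_1 |-> 1, x_i |-> 0 (i <> 1) sends it
   to 1. *)
From mathcomp Require Import all_boot all_order all_fingroup all_algebra.
From Stdlib Require Import ClassicalEpsilon FunctionalExtensionality ProofIrrelevance.
Local Open Scope ring_scope.
Import GRing.Theory.

Section FreeAlgebraCharacters.
Variable k : fieldType.
Implicit Types (f g : fa k) (psi : fa k -> k).

Lemma fa_eq f g : (forall w, coef f w = coef g w) -> f = g.
Proof.
case: f g => cf nf ff [cg ng fg] /= /functional_extensionality eq_c; subst cg.
by rewrite (proof_irrelevance _ nf ng) (proof_irrelevance _ ff fg).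
Qed.

Definition fa_support f : seq (seq nat) :=
  proj1_sig (constructive_indefinite_description _ (coef_fin f)).

Lemma coef_notin_support f w : w \notin fa_support f -> coef f w = 0.
Proof. exact: (proj2_sig (constructive_indefinite_description _ (coef_fin f))). Qed.

Lemma coef_x1_power_large f n :
  (\max_(w <- fa_support f) size w < n)%N -> coef f (nseq n 1%N) = 0.
Proof.
move=> lt_max_n; apply: coef_notin_support; apply/negP => in_supp.
have := @leq_bigmax_seq _ _ xpredT size _ in_supp isT.
by rewrite size_nseq leqNgt lt_max_n.
Qed.

(* The image of [f] in [k[x_1]] under [x_i |-> 0] for [i <> 1]. *)
Definition x1_poly f : {poly k} :=
  \poly_(n < (\max_(w <- fa_support f) size w).+1) coef f (nseq n 1%N).

Lemma coef_x1_poly f n : (x1_poly f)`_n = coef f (nseq n 1%N).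
Proof. by rewrite coef_poly; case: ltnP => // ?; rewrite coef_x1_power_large. Qed.

Lemma x1_poly_linear a f g :
  x1_poly (fa_add (fa_scale a f) g) = a *: x1_poly f + x1_poly g.
Proof. by apply/polyP => n; rewrite coefD coefZ !coef_x1_poly. Qed.

Lemma x1_poly_mul f g : x1_poly (fa_mul f g) = x1_poly f * x1_poly g.
Proof.
apply/polyP => n; rewrite coefM coef_x1_poly /= /mul_coef size_nseq.
apply: eq_bigr => i _.
by rewrite !coef_x1_poly take_nseq ?drop_nseq // -ltnS.
Qed.

Lemma x1_poly_var1 : x1_poly (fa_var k 1) = 'X.
Proof. by apply/polyP => n; rewrite coef_x1_poly coefX; case: n => [|[|n]]. Qed.

Definition is_fa_hom psi : Prop :=
  (forall a f g, psi (fa_add (fa_scale a f) g) = a * psi f + psi g) /\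
  (forall f g, psi (fa_mul f g) = psi f * psi g).

Definition eval_x1_one f : k := (x1_poly f).[1].

Lemma eval_x1_one_hom : is_fa_hom eval_x1_one.
Proof.
split=> [a f g | f g]; rewrite /eval_x1_one.
  by rewrite x1_poly_linear hornerD hornerZ.
by rewrite x1_poly_mul hornerM.
Qed.

Lemma eval_x1_one_var1 : eval_x1_one (fa_var k 1) = 1.
Proof. by rewrite /eval_x1_one x1_poly_var1 hornerX. Qed.

Section Hom.
Variable psi : fa k -> k.
Hypothesis psi_hom : is_fa_hom psi.

Lemma fa_hom0 : psi (fa_zero k) = 0.
Proof.
have zero_eq : fa_add (fa_scale (-1) (fa_zero k)) (fa_zero k) = fa_zero k.
  by apply: fa_eq => w /=; rewrite mulr0 addr0.
by have := psi_hom.1 (-1) (fa_zero k) (fa_zero k); rewrite zero_eq mulN1r addNr.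
Qed.

Lemma fa_homD f g : psi (fa_add f g) = psi f + psi g.
Proof.
have -> : fa_add f g = fa_add (fa_scale 1 f) g by apply: fa_eq => w /=; rewrite mul1r.
by rewrite psi_hom.1 mul1r.
Qed.

Lemma fa_homZ a f : psi (fa_scale a f) = a * psi f.
Proof.
have -> : fa_scale a f = fa_add (fa_scale a f) (fa_zero k).
  by apply: fa_eq => w /=; rewrite addr0.
by rewrite psi_hom.1 fa_hom0 addr0.
Qed.

Lemma fa_hom_sum l : psi (fa_sum l) = \sum_(f <- l) psi f.
Proof.
by elim: l => [|f l IH]; rewrite ?big_nil ?fa_hom0 // big_cons fa_homD IH.
Qed.

Lemma fa_hom_prod l : (0 < size l)%N -> psi (fa_prod l) = \prod_(f <- l) psi f.
Proof.
case: l => // f l _; rewrite big_cons /=.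
elim: l f => [|g l IH] f; first by rewrite big_nil mulr1.
by rewrite /= IH psi_hom.2 big_cons mulrA.
Qed.

Lemma fa_hom_Sp p :
  (0 < p)%N -> psi (Sp k p) = p`!%:R * \prod_(i < p) psi (fa_var k i.+1).
Proof.
move=> p_gt0.
have monomial_val (s : 'S_p) : psi (fa_prod [seq fa_var k (s i).+1 | i <- enum 'I_p])
    = \prod_(i < p) psi (fa_var k i.+1).
  rewrite fa_hom_prod; last by rewrite size_map size_enum_ord.
  rewrite big_map big_enum /= [RHS](reindex_inj (@perm_inj _ s)) /=.
  by apply: eq_bigl => i; rewrite inE.
rewrite /Sp fa_hom_sum big_map (eq_bigr _ (fun s _ => monomial_val s)).
by rewrite big_enum /= sumr_const card_Sn mulr_natl.
Qed.

Lemma fa_hom_x1_pow p : (0 < p)%N -> psi (x1_pow k p) = psi (fa_var k 1) ^+ p.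
Proof.
by move=> p_gt0; rewrite fa_hom_prod ?size_nseq // big_nseq -Monoid.iteropE.
Qed.

End Hom.

Definition fa_hom_kernel f : Prop := forall psi, is_fa_hom psi -> psi f = 0.

Lemma fa_hom_kernel_tspace : is_tspace fa_hom_kernel.
Proof.
split=> [psi psi_hom | f g kf kg psi psi_hom | a f kf psi psi_hom |].
- exact: fa_hom0.
- by rewrite fa_homD // kf // kg // addr0.
- by rewrite fa_homZ // kf // mulr0.
move=> phi [phi_lin phi_mul] f kf psi [psi_lin psi_mul].
by apply: (kf (psi \o phi)); split=> [a f' g | f' g] /=;
  rewrite ?phi_lin ?psi_lin ?phi_mul ?psi_mul.
Qed.

Lemma Sp_in_fa_hom_kernel p : p \in [pchar k] -> fa_hom_kernel (Sp k p).
Proof.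
move=> pchar_p psi psi_hom; have p_gt0 := prime_gt0 (pcharf_prime pchar_p).
have /eqP fact_eq0 : p`!%:R == 0 :> k.
  by rewrite -(dvdn_pcharf pchar_p) dvdn_fact // p_gt0 leqnn.
by rewrite fa_hom_Sp // fact_eq0 mul0r.
Qed.

Lemma R1_sub_fa_hom_kernel p f : p \in [pchar k] -> R1 p f -> fa_hom_kernel f.
Proof.
move=> pchar_p R1f; apply: R1f fa_hom_kernel_tspace _ => _ ->.
exact: Sp_in_fa_hom_kernel.
Qed.

Lemma x1_pow_notin_fa_hom_kernel p : (0 < p)%N -> ~ fa_hom_kernel (x1_pow k p).
Proof.
move=> p_gt0 /(_ _ eval_x1_one_hom).
rewrite (@fa_hom_x1_pow _ eval_x1_one_hom _ p_gt0) eval_x1_one_var1 expr1n.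
by move/eqP; rewrite oner_eq0.
Qed.

End FreeAlgebraCharacters.

Theorem proposition5p1 (p : nat) (k : fieldType) (hp : prime p)
    (hk : p \in [pchar k]) :
  ~ (forall f : fa k, R1 p f <-> L1 p f).
Proof.
move=> R1_eq_L1.
have L1_x1_pow : L1 p (x1_pow k p) by move=> V _; apply.
apply: (x1_pow_notin_fa_hom_kernel k p (prime_gt0 hp)).
exact: R1_sub_fa_hom_kernel k p _ hk ((R1_eq_L1 _).2 L1_x1_pow).
Qed.
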